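(* For every prime power $q$ and every integer $m$ with $1\leq m\leq q-1$, $$\sum_{i=0}^{m}\binom{q}{i}\sum_{d=i}^{m}\sum_{k=0}^{d-i}(-1)^k\binom{q-i}{k}q^{d-i-k}=\frac{q^{m+1}-1}{q-1}.$$ *)

From mathcomp Require Import all_boot all_order all_algebra.
Set Implicit Arguments. Unset Strict Implicit. Unset Printing Implicit Defensive.
Import Order.TTheory GRing.Theory Num.Theory.

Definition prime_power (q : nat) : Prop :=
  exists p e : nat, prime p /\ (0 < e)%N /\ q = (p ^ e)%N.

From mathcomp Require Import all_boot all_order all_algebra.
From mathcomp Require Import ring zify.
Import Order.TTheory GRing.Theory Num.Theory.
Local Open Scope ring_scope.

(* Exchanging the sums over i and d, the left-hand side is sum_(d <= m) A(d),
   where A(d) = sum_i 'C(q, i) sum_k (-1)^k 'C(q - i, k) q^(d - i - k).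
   Putting s = i + k and using 'C(q, i) 'C(q - i, s - i) = 'C(q, s) 'C(s, i),
   A(d) = sum_s 'C(q, s) q^(d - s) (1 - 1)^s = q^d, for any q.  So the sum is
   the geometric series 1 + q + ... + q^m. *)

Lemma bin_trinomial (n i s : nat) : (i <= s)%N ->
  ('C(n, i) * 'C(n - i, s - i) = 'C(n, s) * 'C(s, i))%N.
Proof.
move=> le_is; have [le_sn | lt_ns] := leqP s n; last first.
  have [le_in | lt_ni] := leqP i n.
    by rewrite (@bin_small (n - i)) ?(@bin_small n s) ?muln0 ?mul0n //; lia.
  by rewrite (@bin_small n i) ?(@bin_small n s) ?mul0n.
have facts_gt0 : (0 < i`! * (s - i)`! * (n - s)`!)%N by rewrite !muln_gt0 !fact_gt0.
apply/eqP; rewrite -(eqn_pmul2r facts_gt0); apply/eqP.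
have bin_ni := @bin_fact n i ltac:(lia).
have bin_nis := @bin_fact (n - i) (s - i) ltac:(lia).
rewrite (_ : n - i - (s - i) = n - s)%N in bin_nis; last by lia.
have bin_ns := bin_fact le_sn; have bin_si := bin_fact le_is.
transitivity ('C(n, i) * (i`! * ('C(n - i, s - i) * ((s - i)`! * (n - s)`!))))%N.
  by ring.
rewrite bin_nis bin_ni -bin_ns -bin_si; ring.
Qed.

Lemma sum_bin_alternating (R : comRingType) (s : nat) :
  \sum_(i < s.+1) 'C(s, i)%:R * (-1) ^+ (s - i) = (s == 0%N)%:R :> R.
Proof.
have := exprDn (-1 : R) 1 s; rewrite addNr expr0n => ->.
by apply: eq_bigr => i _; rewrite expr1n mulr1 mulr_natl.
Qed.

Lemma exchange_big_nat_triangle (R : Type) (idx : R) (op : Monoid.com_law idx)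
    (n : nat) (F : nat -> nat -> R) :
  \big[op/idx]_(0 <= i < n) \big[op/idx]_(i <= j < n) F i j =
  \big[op/idx]_(0 <= j < n) \big[op/idx]_(0 <= i < j.+1) F i j.
Proof.
rewrite (eq_bigr (fun i => \big[op/idx]_(0 <= j < n | (i <= j)%N) F i j)); last first.
  by move=> i _; rewrite (big_nat_widenl i 0).
rewrite (exchange_big_dep_nat predT) //=; apply: eq_big_nat => j /andP[_ lt_jn].
by rewrite [RHS](big_nat_widen _ _ _ _ _ lt_jn).
Qed.

Lemma sum_bin_alternating_convolution (R : comRingType) (n d : nat) (x : R) :
  \sum_(0 <= i < d.+1) 'C(n, i)%:R *
    \sum_(0 <= k < (d - i).+1) (-1) ^+ k * 'C(n - i, k)%:R * x ^+ (d - i - k)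
  = x ^+ d.
Proof.
have shift_k i : (i <= d)%N ->
    \sum_(0 <= k < (d - i).+1) (-1) ^+ k * 'C(n - i, k)%:R * x ^+ (d - i - k)
  = \sum_(i <= s < d.+1) (-1) ^+ (s - i) * 'C(n - i, s - i)%:R * x ^+ (d - s).
  move=> le_id; rewrite [RHS](big_addn 0 d.+1 i) subSn //.
  by apply: eq_bigr => k _; rewrite addnK addnC subnDA.
under eq_big_nat => i /andP[_ le_id] do rewrite (shift_k i le_id) big_distrr /=.
rewrite exchange_big_nat_triangle big_ltn //= big_nat1 subnn !bin0 !subn0 !mul1r.
rewrite big1_seq ?addr0 // => s /andP[_]; rewrite mem_index_iota => /andP[s_gt0 _].
have row_s : \sum_(0 <= i < s.+1) 'C(s, i)%:R * (-1) ^+ (s - i) = 0 :> R.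
  by rewrite big_mkord sum_bin_alternating gtn_eqF.
rewrite -[RHS](mulr0 ('C(n, s)%:R * x ^+ (d - s))) -[X in _ = _ * X]row_s big_distrr /=.
apply: eq_big_nat => i /andP[_ lt_is].
have trinomial : 'C(n, i)%:R * 'C(n - i, s - i)%:R = 'C(n, s)%:R * 'C(s, i)%:R :> R.
  by rewrite -!natrM bin_trinomial // ltnW.
transitivity ((-1) ^+ (s - i) * x ^+ (d - s) * ('C(n, i)%:R * 'C(n - i, s - i)%:R)).
  by ring.
rewrite trinomial; ring.
Qed.

Lemma sum_expr_geometric (F : fieldType) (x : F) (n : nat) : x != 1 ->
  \sum_(0 <= d < n) x ^+ d = (x ^+ n - 1) / (x - 1).
Proof.
by move=> x_neq1; rewrite subrX1 [(x - 1) * _]mulrC mulfK ?subr_eq0 // big_mkord.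
Qed.

Lemma prime_power_gt1 (q : nat) : prime_power q -> (1 < q)%N.
Proof.
by move=> [p [e [p_prime [e_gt0 ->]]]]; rewrite -(expn0 p) ltn_exp2l ?prime_gt1.
Qed.

Theorem mainTheorem2 (q m : nat) :
  prime_power q -> (1 <= m)%N -> (m <= q - 1)%N ->
  \sum_(0 <= i < m.+1)
     ('C(q, i))%:R *
     \sum_(i <= d < m.+1)
        \sum_(0 <= k < (d - i).+1)
           (-1) ^+ k * ('C(q - i, k))%:R * (q%:R) ^+ (d - i - k)
  = ((q%:R : rat) ^+ m.+1 - 1) / (q%:R - 1).
Proof.
move=> /prime_power_gt1 q_gt1 _ _.
under eq_bigr do rewrite big_distrr /=.
rewrite exchange_big_nat_triangle.
under eq_bigr do rewrite sum_bin_alternating_convolution.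
rewrite sum_expr_geometric ?pnatr_eq1 ?gtn_eqF //.
Qed.
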